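(* Consider the two-server network of re-entrant lines with infinite supply described in the context, and suppose it is critical, i.e. $\sum_{j\in C_1(i)}\mu_{i,j}^{-1}=\sum_{j\in C_2(i)}\mu_{i,j}^{-1}$ for every $i=1,\dots,S$, where $C_\ell(i)=\{j\in\{0,\dots,n_i\}:\sigma(i,j)=\ell\}$. Then the network is non-stabilizable: there is no deterministic stationary non-idling policy under which the associated Markov process has a positive recurrent class that is reached with probability 1.
   Context: There are two servers, labeled 1 and 2, and $S\ge1$ job streams. Stream $i$ has $n_i+1$ operations $(i,0),(i,1),\dots,(i,n_i)$ with $n_i\ge1$; each operation $(i,j)$ is performed by a unique server $\sigma(i,j)\in\{1,2\}$ and completes at exponential rate $\mu_{i,j}>0$ (preemption allowed). Operation $(i,0)$ draws from an infinite supply of raw material and is always available; each operation $(i,j)$ with $j\ge1$ has an associated queue, so there are $M=\sum_i n_i$ queues and the state is the vector of queue lengths in $\mathbb{Z}_+^M$. Completion of $(i,0)$ adds a job to the queue of $(i,1)$; completion of $(i,j)$ for $1\le j\le n_i-1$ moves a job from the queue of $(i,j)$ to the queue of $(i,j+1)$; completion of $(i,n_i)$ removes a job from the queue of $(i,n_i)$. An operation $(i,j)$ with $j\ge1$ may be performed only if its queue is non-empty. A non-idling (deterministic stationary) policy assigns, as a function of the state, to each server one of its operations that may be performed. Given a policy, the chosen operations run simultaneously and the state jumps according to whichever completes first, giving a Markov jump process (equivalently its embedded discrete-time chain). The network is non-stabilizable if no non-idling policy makes this process have a positive recurrent class reached with probability 1. *)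

From HB Require Import structures.
From mathcomp Require Import all_boot all_order all_algebra.
From mathcomp Require Import all_classical all_reals all_analysis.
From Stdlib Require Import Relations.

Set Implicit Arguments.
Unset Strict Implicit.
Unset Printing Implicit Defensive.

Import Order.TTheory GRing.Theory Num.Theory numFieldNormedType.Exports.
Local Open Scope classical_set_scope.
Local Open Scope ring_scope.

(* Generic discrete-time Markov chain on an eqType T whose transition   *)
(* kernel has finite support: [step x] lists pairs (probability, next). *)
(* (Repeated targets are allowed; their weights add up.)               *)
Section Chain.
Variables (R : realType) (T : eqType) (step : T -> seq (R * T)).

Definition edge (x y : T) : Prop := has (fun p => (p.2 == y) && (0 < p.1)) (step x).

Definition leads : relation T := clos_refl_trans T edge.

(* weighted positions at time k of the paths started at x that avoid A
   at times 1..k (time 0 is not checked) *)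
Fixpoint walk (A : pred T) (k : nat) (x : T) : seq (R * T) :=
  match k with
  | 0 => [:: (1, x)]
  | k'.+1 => flatten [seq [seq (p.1 * q.1, q.2) | q <- step p.2 & q.2 \notin A]
                      | p <- walk A k' x]
  end.

(* P_x(tau_A = k) where tau_A = inf {k >= 1 : X_k \in A} *)
Definition firstpass (A : pred T) (x : T) (k : nat) : R :=
  match k with
  | 0 => 0
  | k'.+1 => \sum_(p <- walk A k' x) \sum_(q <- step p.2 | q.2 \in A) p.1 * q.1
  end.

Definition recurrent (y : T) : Prop :=
  series (firstpass (pred1 y) y) @ \oo --> (1 : R).

Definition positive_recurrent (y : T) : Prop :=
  recurrent y /\
  exists l : R, series (fun k => k%:R * firstpass (pred1 y) y k) @ \oo --> l.

Definition comm_class (C : pred T) : Prop :=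
  (exists x, x \in C) /\
  (forall x y, x \in C -> (y \in C <-> (leads x y /\ leads y x))).

Definition pos_rec_class (C : pred T) : Prop :=
  comm_class C /\ forall y, y \in C -> positive_recurrent y.

Definition reached_as (x0 : T) (C : pred T) : Prop :=
  x0 \in C \/ series (firstpass C x0) @ \oo --> (1 : R).

End Chain.

(* Streams i : 'I_S, stream i has operations j : 'I_(n i).+1 (operation *)
(* (i,0) draws from the infinite supply); the queue of operation (i,j), *)
(* j >= 1, is indexed by (i, j-1) : Queue n.                            *)
(* Servers 1 and 2 are represented by 0 and 1 in 'I_2.                 *)
Section Network.
Variables (S : nat) (n : 'I_S -> nat).

Definition Op := {i : 'I_S & 'I_(n i).+1}.
Definition Queue := {i : 'I_S & 'I_(n i)}.
Definition op_of (i : 'I_S) (j : 'I_(n i).+1) : Op := Tagged (fun i => 'I_(n i).+1) j.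

Definition State := {ffun Queue -> nat}.

Definition avail (x : State) (o : Op) : bool :=
  (val (tagged o) == 0%N) ||
  [exists q : Queue, [&& tag q == tag o, (val (tagged q)).+1 == val (tagged o)
                        & (0 < x q)%N]].

(* state after completion of operation o = (i,j): the queue of (i,j) (if
   j >= 1) loses a job, the queue of (i,j+1) (if j < n_i) gains one *)
Definition next (x : State) (o : Op) : State :=
  [ffun q : Queue => if tag q == tag o then
       (x q + (val (tagged q) == val (tagged o)) - ((val (tagged q)).+1 == val (tagged o)))%N
     else x q].

(* deterministic stationary non-idling policies: for each state and server
   the operation being performed (None = idle, only allowed if the server
   has no operation that may be performed) *)
Definition policy := State -> 'I_2 -> option Op.

Definition nonidling (sigma : Op -> 'I_2) (pol : policy) : Prop :=
  forall (x : State) (l : 'I_2),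
    match pol x l with
    | Some o => sigma o = l /\ avail x o
    | None => forall o : Op, sigma o = l -> ~~ avail x o
    end.

Variable R : realType.

(* embedded jump chain of the Markov jump process under policy pol *)
Definition active (pol : policy) (x : State) : seq Op := pmap (pol x) (enum 'I_2).

Definition total_rate (mu : Op -> R) (pol : policy) (x : State) : R :=
  \sum_(o <- active pol x) mu o.

Definition jump_step (mu : Op -> R) (pol : policy) (x : State) : seq (R * State) :=
  if active pol x is [::] then [:: (1, x)]
  else [seq (mu o / total_rate mu pol x, next x o) | o <- active pol x].

Definition critical (sigma : Op -> 'I_2) (mu : Op -> R) : Prop :=
  forall i : 'I_S,
    \sum_(j < (n i).+1 | sigma (op_of j) == 0) (mu (op_of j))^-1 =
    \sum_(j < (n i).+1 | sigma (op_of j) == 1) (mu (op_of j))^-1.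

End Network.

From Pilot Require Import Defs.
From HB Require Import structures.
From mathcomp Require Import all_boot all_order all_algebra.
From mathcomp Require Import all_classical all_reals all_analysis.
From mathcomp Require Import ring lra.
Import Order.TTheory GRing.Theory Num.Theory numFieldNormedType.Exports.
Local Open Scope classical_set_scope.
Local Open Scope ring_scope.
Set Implicit Arguments.
Unset Strict Implicit.
Unset Printing Implicit Defensive.

(* Let [l0] be the server of an operation (i,0), which is always available.
   The imbalance [G x] between the expected remaining work, at the other server
   and at [l0], of the jobs in the queues increases by 1/mu(o) when [l0]
   completes [o] and decreases by 1/mu(o) when the other server does;
   criticality makes arriving jobs neutral.  So the embedded chain has
   nonnegative drift in [G] and bounded nonzero jumps, and such a chain has no
   positive recurrent state [y].  Along an excursion from [y],
   E[G(X_k); tau > k] is at most B k P(tau > k), which is small on average when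
   E tau < oo, so the drift vanishes along the excursion.  Then [G] is a
   martingale absorbed at G(y) = 0, whose second moment on survivors is bounded
   by B^2 E tau, and yet keeps growing, because absorption from a state [z]
   costs about G(z)^2 more. *)

Lemma sqr_le_of_norm (R : realDomainType) (a b : R) : `|a| <= b -> a ^+ 2 <= b ^+ 2.
Proof.
move=> ab; rewrite -real_normK ?num_real // ler_sqr ?nnegrE //.
exact: le_trans ab.
Qed.

Lemma exists_nat_mul_gt (R : archiRealFieldType) (c x : R) :
  0 < c -> exists j : nat, x < j%:R * c.
Proof.
move=> c_gt0; exists (Num.Def.archi_bound `|x / c|).
by rewrite -ltr_pdivrMr // (le_lt_trans (ler_norm _)) // archi_boundP.
Qed.

Lemma no_uniform_increase (R : archiRealFieldType) (f : nat -> R) (M c : R) (K0 : nat) :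
  0 < c -> (forall K, f K <= M) ->
  ~ (forall K, (K0 <= K)%N -> exists2 K', (K0 <= K')%N & f K + c <= f K').
Proof.
move=> c_gt0 f_le inc.
have grow j : exists2 K, (K0 <= K)%N & f K0 + j%:R * c <= f K.
  elim: j => [|j [K K0K fK]]; first by exists K0; rewrite // mul0r addr0.
  have [K' K0K' fK'] := inc K K0K; exists K' => //.
  by rewrite mulrSr mulrDl mul1r addrA (le_trans _ fK') // lerD2r.
have [j lt_j] := exists_nat_mul_gt (M - f K0) c_gt0.
have [K _ fK] := grow j.
by move: (le_trans fK (f_le K)); rewrite -lerBrDl leNgt lt_j.
Qed.

Section KilledChain.
Variables (R : realType) (T : eqType) (step : T -> seq (R * T)).
Implicit Types (A : pred T) (l : seq (R * T)) (h G : T -> R).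

Definition mean l h : R := \sum_(p <- l) p.1 * h p.2.

Definition mass l : R := mean l (fun _ => 1).

(* A list of weighted states encodes a finite sub-probability measure;
   [kill A] moves it one step forward and discards the mass entering [A]. *)
Definition kill A l : seq (R * T) :=
  flatten [seq [seq (p.1 * q.1, q.2) | q <- step p.2 & q.2 \notin A] | p <- l].

Definition entry_mean A l h : R :=
  \sum_(p <- l) p.1 * \sum_(q <- step p.2 | q.2 \in A) q.1 * h q.2.

Definition step_mean h x : R := \sum_(q <- step x) q.1 * h q.2.

Definition drift G x : R := step_mean (fun z => G z - G x) x.

Definition jump2 G x : R := step_mean (fun z => (G z - G x) ^+ 2) x.

Definition scale (a : R) l : seq (R * T) := [seq (a * p.1, p.2) | p <- l].

Lemma walk_iter_kill A k x : walk step A k x = iter k (kill A) [:: (1, x)].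
Proof. by elim: k => //= k ->. Qed.

Lemma firstpass_entry_mean A x k :
  firstpass step A x k.+1 = entry_mean A (walk step A k x) (fun _ => 1).
Proof.
rewrite /firstpass /entry_mean; apply: eq_bigr => p _; rewrite mulr_sumr.
by apply: eq_bigr => q _; rewrite mulr1.
Qed.

Lemma mean_kill A l h : mean (kill A l) h + entry_mean A l h = mean l (step_mean h).
Proof.
rewrite /mean /entry_mean /kill big_flatten /= big_map -big_split /=.
apply: eq_bigr => p _.
rewrite big_map big_filter /step_mean [in RHS](bigID (fun q => q.2 \in A)) /=.
rewrite mulrDr addrC; congr (_ + _); rewrite mulr_sumr.
all: by apply: eq_bigr => q _; rewrite mulrA.
Qed.

Lemma entry_mean_pred1 y l h : h y = 0 -> entry_mean (pred1 y) l h = 0.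
Proof.
move=> hy; rewrite /entry_mean big1 // => p _; rewrite big1 ?mulr0 // => q.
by rewrite inE => /eqP ->; rewrite hy mulr0.
Qed.

Lemma mean1 x h : mean [:: (1, x)] h = h x.
Proof. by rewrite /mean big_seq1 mul1r. Qed.

Lemma mean_cat l1 l2 h : mean (l1 ++ l2) h = mean l1 h + mean l2 h.
Proof. by rewrite /mean big_cat. Qed.

Lemma meanD l h1 h2 : mean l (fun x => h1 x + h2 x) = mean l h1 + mean l h2.
Proof. by rewrite /mean -big_split; apply: eq_bigr => p _; rewrite mulrDr. Qed.

Lemma meanZ l c h : mean l (fun x => c * h x) = c * mean l h.
Proof. by rewrite /mean mulr_sumr; apply: eq_bigr => p _; rewrite mulrCA. Qed.

Lemma eq_mean l h1 h2 :
  (forall p, p \in l -> p.1 * h1 p.2 = p.1 * h2 p.2) -> mean l h1 = mean l h2.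
Proof. by move=> eq_h; rewrite /mean big_seq [RHS]big_seq; apply: eq_bigr. Qed.

Lemma ler_mean l h1 h2 :
  (forall p, p \in l -> p.1 * h1 p.2 <= p.1 * h2 p.2) -> mean l h1 <= mean l h2.
Proof. by move=> le_h; rewrite /mean big_seq [leRHS]big_seq; apply: ler_sum. Qed.

Lemma mean_ge0 l h :
  (forall p, p \in l -> 0 <= p.1) -> (forall x, 0 <= h x) -> 0 <= mean l h.
Proof.
move=> l_ge0 h_ge0; rewrite /mean big_seq; apply: sumr_ge0 => p p_l.
by rewrite mulr_ge0 ?l_ge0.
Qed.

Lemma mean_sqr_ge l h c : (forall p, p \in l -> 0 <= p.1) ->
  2 * c * mean l h - c ^+ 2 * mass l <= mean l (fun x => h x ^+ 2).
Proof.
move=> l_ge0; rewrite -subr_ge0.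
have -> : mean l (fun x => h x ^+ 2) - (2 * c * mean l h - c ^+ 2 * mass l) =
          mean l (fun x => (h x - c) ^+ 2).
  have -> : mean l (fun x => (h x - c) ^+ 2) =
      mean l (fun x => h x ^+ 2 + (- (2 * c) * h x + c ^+ 2 * 1)).
    by apply: eq_mean => p _; congr (_ * _); ring.
  by rewrite /mass !meanD !meanZ; ring.
by apply: mean_ge0 => // x; apply: sqr_ge0.
Qed.

Lemma mean_scale a l h : mean (scale a l) h = a * mean l h.
Proof. by rewrite /mean big_map mulr_sumr; apply: eq_bigr => p _; rewrite mulrA. Qed.

Lemma kill_cat A l1 l2 : kill A (l1 ++ l2) = kill A l1 ++ kill A l2.
Proof. by rewrite /kill map_cat flatten_cat. Qed.

Lemma kill_scale A a l : kill A (scale a l) = scale a (kill A l).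
Proof.
rewrite /kill /scale map_flatten -!map_comp; congr flatten.
apply: eq_map => p /=; rewrite -map_comp; apply: eq_map => q /=.
by rewrite mulrA.
Qed.

Lemma iter_kill_cat A m l1 l2 :
  iter m (kill A) (l1 ++ l2) = iter m (kill A) l1 ++ iter m (kill A) l2.
Proof. by elim: m => //= m ->; rewrite kill_cat. Qed.

Lemma iter_kill_scale A m a l : iter m (kill A) (scale a l) = scale a (iter m (kill A) l).
Proof. by elim: m => //= m ->; rewrite kill_scale. Qed.

Lemma iter_kill_nil A m : iter m (kill A) [::] = [::].
Proof. by elim: m => //= m ->. Qed.

Lemma mean_iter_kill A m l h : mean (iter m (kill A) l) h =
  \sum_(p <- l) p.1 * mean (iter m (kill A) [:: (1, p.2)]) h.
Proof.
elim: l => [|p l IH]; first by rewrite iter_kill_nil /mean !big_nil.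
rewrite -cat1s iter_kill_cat mean_cat IH big_cons; congr (_ + _).
have -> : [:: p] = scale p.1 [:: (1, p.2)] by rewrite /scale /= mulr1; case: p.
by rewrite iter_kill_scale mean_scale.
Qed.

Lemma mem_kill A p l : p \in kill A l ->
  exists p' q, [/\ p' \in l, q \in step p'.2 & p = (p'.1 * q.1, q.2)].
Proof.
case/flattenP=> s /mapP [p' p'_l ->] /mapP [q].
by rewrite mem_filter => /andP [_ q_step] ->; exists p', q.
Qed.

End KilledChain.

Section ReturnTime.
Variables (R : realType) (T : eqType) (step : T -> seq (R * T)) (y : T).
Hypothesis step_ge0 : forall x q, q \in step x -> 0 <= q.1.
Hypothesis step_sum1 : forall x, \sum_(q <- step x) q.1 = 1.

Lemma iter_kill_ge0 A m l : (forall p, p \in l -> 0 <= p.1) ->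
  forall p, p \in iter m (kill step A) l -> 0 <= p.1.
Proof.
move=> l_ge0; elim: m => [|m IH] p /=; first exact: l_ge0.
case/mem_kill=> p' [q [p'_in q_in ->]] /=.
by apply: mulr_ge0; [exact: IH | exact: step_ge0 q_in].
Qed.

Lemma iter_kill1_ge0 A m x p : p \in iter m (kill step A) [:: (1, x)] -> 0 <= p.1.
Proof. by apply: iter_kill_ge0 => p'; rewrite inE => /eqP ->. Qed.

Lemma step_mean1 x : step_mean step (fun _ => 1) x = 1.
Proof. by rewrite /step_mean -[RHS](step_sum1 x); apply: eq_bigr => q _; rewrite mulr1. Qed.

Definition survivors k := iter k (kill step (pred1 y)) [:: (1, y)].

Definition survival k := mass (survivors k).

(* [survival k] is P_y(tau > k) for the return time tau to [y], so
   [survival_sum L] is E_y[min tau L]. *)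
Definition survival_sum L := \sum_(0 <= k < L) survival k.

Local Notation ret := (firstpass step (pred1 y) y).

Lemma survivors_ge0 k p : p \in survivors k -> 0 <= p.1.
Proof. exact: iter_kill1_ge0. Qed.

Lemma survivalS k : survival k.+1 + ret k.+1 = survival k.
Proof.
rewrite firstpass_entry_mean walk_iter_kill /survival /mass /survivors /=.
by rewrite mean_kill; apply: eq_mean => p _; rewrite step_mean1.
Qed.

Lemma survival0 : survival 0 = 1.
Proof. exact: mean1. Qed.

Lemma ret_ge0 k : 0 <= ret k.
Proof.
case: k => [|k]; first by rewrite /firstpass.
rewrite firstpass_entry_mean walk_iter_kill /entry_mean big_seq.
apply: sumr_ge0 => p p_in; rewrite mulr_ge0 ?(iter_kill1_ge0 p_in) //.
rewrite big_seq_cond; apply: sumr_ge0 => q /andP [q_in _].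
by rewrite mulr1 (step_ge0 q_in).
Qed.

Lemma survival_le i j : (i <= j)%N -> survival j <= survival i.
Proof.
move/subnK => <-; elim: (j - i)%N => //= m IH.
by rewrite addSn (le_trans _ IH) // -(survivalS (m + i)) lerDl ret_ge0.
Qed.

Lemma series_ret k : series ret k.+1 = 1 - survival k.
Proof.
elim: k => [|k IH].
  by rewrite seriesSr /series /= big_geq // add0r /firstpass survival0 subrr.
by rewrite seriesSr IH -(survivalS k); ring.
Qed.

Lemma series_mean_ret N : series (fun k => k%:R * ret k) N.+1 =
  \sum_(0 <= k < N.+1) (survival k - survival N).
Proof.
elim: N => [|N IH].
  by rewrite seriesSr /series /= big_geq // big_nat1 subrr mul0r addr0.
rewrite seriesSr IH [in RHS]big_nat_recr //= subrr addr0.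
have -> : \sum_(0 <= k < N.+1) (survival k - survival N.+1) =
    \sum_(0 <= k < N.+1) (survival k - survival N) +
    \sum_(0 <= k < N.+1) (survival N - survival N.+1).
  by rewrite -big_split /=; apply: eq_bigr => k _; ring.
have -> : survival N - survival N.+1 = ret N.+1 by rewrite -(survivalS N); ring.
by rewrite sumr_const_nat subn0 mulr_natl.
Qed.

Variable E : R.
Hypothesis ret_cvg : series ret @ \oo --> (1 : R).
Hypothesis mean_ret_cvg : series (fun k => k%:R * ret k) @ \oo --> E.

Lemma survival_sum_le L : survival_sum L <= E.
Proof.
pose h N := series (fun k => k%:R * ret k) N + L%:R * (1 - series ret N).
have h_cvg : h @ \oo --> E + L%:R * (1 - 1).
  by apply: cvgD => //; apply: cvgM; [exact: cvg_cst | apply: cvgB => //; exact: cvg_cst].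
have le_h : \forall N \near \oo, survival_sum L <= h N.
  near=> N.
  have LN : (L.+1 <= N)%N by near: N; exact: nbhs_infty_ge.
  have N_gt0 : (0 < N)%N := leq_trans (ltn0Sn L) LN.
  rewrite -(prednK N_gt0) in LN *.
  move: N.-1 LN => N' LN.
  rewrite /h series_mean_ret series_ret (_ : 1 - (1 - survival N') = survival N'); last by ring.
  rewrite (big_cat_nat (leq0n L) (ltnW LN)) /= sumrB sumr_const_nat subn0 mulr_natl.
  rewrite addrAC subrK lerDl big_nat_cond; apply: sumr_ge0 => k /andP [/andP [_ kN] _].
  by rewrite subr_ge0 survival_le.
have := limr_ge (cvgP _ h_cvg) le_h.
by rewrite (cvg_lim (@Rhausdorff R) h_cvg) subrr mulr0 addr0; apply.
Unshelve. all: end_near.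
Qed.

Lemma survival_sum_gap K :
  K%:R * survival (K + K) <= survival_sum (K + K) - survival_sum K.
Proof.
rewrite /survival_sum (big_cat_nat (leq0n K) (leq_addr K K)) /= addrC addrK.
have -> : K%:R * survival (K + K) = \sum_(K <= k < K + K) survival (K + K).
  by rewrite sumr_const_nat addnK mulr_natl.
by apply: ler_sum_nat => k /andP [_ kK]; rewrite survival_le // ltnW.
Qed.

Lemma survival_mul_le N : N%:R * survival N <= E.
Proof.
apply: le_trans (survival_sum_le N).
have -> : N%:R * survival N = \sum_(0 <= k < N) survival N.
  by rewrite sumr_const_nat subn0 mulr_natl.
by apply: ler_sum_nat => k /andP [_ kN]; rewrite survival_le // ltnW.
Qed.

Lemma exists_small_survival (a c : R) K : 0 <= a -> 0 < c ->
  exists m, a * survival (m + K) < c.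
Proof.
move=> a_ge0 c_gt0; have [m lt_m] := exists_nat_mul_gt (a * E) c_gt0.
have aE_ge0 : 0 <= a * E.
  by rewrite mulr_ge0 // (le_trans _ (survival_sum_le 0)) // /survival_sum big_geq.
have mK_gt0 : 0 < (m + K)%:R :> R.
  by rewrite ltr0n addn_gt0; case: m lt_m => [|//]; rewrite mul0r ltNge aE_ge0.
exists m.
rewrite -(ltr_pM2l mK_gt0) mulrCA (le_lt_trans (ler_wpM2l a_ge0 (survival_mul_le _))) //.
by rewrite (lt_le_trans lt_m) // ler_pM2r // ler_nat leq_addr.
Qed.

Section Submartingale.
Variables (G : T -> R) (B : R).
Hypothesis Gy0 : G y = 0.
Hypothesis B_gt0 : 0 < B.
Hypothesis jump_le : forall x q, q \in step x -> `|G q.2 - G x| <= B.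
Hypothesis drift_ge0 : forall x, 0 <= drift step G x.

Local Notation kill_y := (kill step (pred1 y)).

Lemma step_mean_G x : step_mean step G x = G x + drift step G x.
Proof.
rewrite /drift /step_mean -[X in X + _]mul1r -[X in X * G x](step_sum1 x).
rewrite mulr_suml -big_split /=.
by apply: eq_bigr => q _; ring.
Qed.

Lemma step_mean_G2 x : step_mean step (fun z => G z ^+ 2) x =
  G x ^+ 2 + 2 * G x * drift step G x + jump2 step G x.
Proof.
rewrite /jump2 /drift /step_mean -[X in X + _ + _]mul1r -[X in X * G x ^+ 2](step_sum1 x).
rewrite mulr_suml mulr_sumr -!big_split /=.
by apply: eq_bigr => q _; ring.
Qed.

Lemma mean_kill_G l : mean (kill_y l) G = mean l G + mean l (drift step G).
Proof.
have := mean_kill step (pred1 y) l G; rewrite entry_mean_pred1 // addr0 => ->.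
by rewrite -meanD; apply: eq_mean => p _; rewrite step_mean_G.
Qed.

Lemma mean_kill_G2 l : mean (kill_y l) (fun x => G x ^+ 2) =
  mean l (fun x => G x ^+ 2) + 2 * mean l (fun x => G x * drift step G x)
  + mean l (jump2 step G).
Proof.
have := mean_kill step (pred1 y) l (fun x => G x ^+ 2).
rewrite entry_mean_pred1 ?Gy0 ?expr0n // addr0 => ->.
rewrite -meanZ -!meanD; apply: eq_mean => p _; rewrite step_mean_G2; congr (_ * _); ring.
Qed.

Lemma survivors_G_le k p : p \in survivors k -> `|G p.2| <= B * k%:R.
Proof.
elim: k p => [|k IH] p; first by rewrite inE => /eqP ->; rewrite Gy0 normr0 mulr0.
case/mem_kill=> p' [q [p'_in q_in ->]] /=.
rewrite -[G q.2](subrK (G p'.2)) (le_trans (ler_normD _ _)) // mulrSr mulrDr mulr1 addrC.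
by rewrite lerD ?IH ?jump_le.
Qed.

Lemma mean_survivors_G K :
  mean (survivors K) G = \sum_(0 <= k < K) mean (survivors k) (drift step G).
Proof.
elim: K => [|K IH]; first by rewrite big_geq // mean1 Gy0.
by rewrite big_nat_recr //= -IH mean_kill_G.
Qed.

Lemma mean_survivors_G_le K : mean (survivors K) G <= B * K%:R * survival K.
Proof.
rewrite /survival /mass -meanZ; apply: ler_mean => p p_in; rewrite mulr1.
by rewrite ler_wpM2l ?(survivors_ge0 p_in) // (le_trans (ler_norm _)) ?survivors_G_le.
Qed.

Lemma mean_survivors_drift_ge0 k : 0 <= mean (survivors k) (drift step G).
Proof. by apply: mean_ge0 => // p /survivors_ge0. Qed.

(* A positive drift at time [k] would make the mean of [G] on survivors at
   time [2K] exceed a fixed fraction of [2K] times the survival probability,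
   so the truncated mean return time would grow linearly along [K, 2K, 4K, ...]. *)
Lemma mean_survivors_drift k : mean (survivors k) (drift step G) = 0.
Proof.
apply/eqP; rewrite eq_le mean_survivors_drift_ge0 andbT leNgt; apply/negP => D_gt0.
set c := mean (survivors k) (drift step G) / (2 * B).
apply: (@no_uniform_increase _ survival_sum E c k.+1) => [||K kK].
- by rewrite divr_gt0 // mulr_gt0.
- exact: survival_sum_le.
have k_lt : (k < K + K)%N by rewrite (leq_trans kK) ?leq_addr.
exists (K + K); first exact: leq_trans kK (leq_addr K K).
rewrite addrC -lerBrDr /c ler_pdivrMr ?mulr_gt0 //.
apply: (@le_trans _ _ (mean (survivors (K + K)) G)).
  rewrite mean_survivors_G big_mkord (bigD1 (Ordinal k_lt)) //= lerDl.
  by apply: sumr_ge0 => i _; apply: mean_survivors_drift_ge0.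
apply: le_trans (mean_survivors_G_le _) _.
have -> : B * (K + K)%:R * survival (K + K) = K%:R * survival (K + K) * (2 * B).
  by rewrite natrD; ring.
by rewrite ler_pM2r ?mulr_gt0 // survival_sum_gap.
Qed.

Lemma survivors_future_drift K m p : p \in survivors K -> 0 < p.1 ->
  mean (iter m kill_y [:: (1, p.2)]) (drift step G) = 0.
Proof.
move=> p_in p_gt0.
pose X (p : R * T) := p.1 * mean (iter m kill_y [:: (1, p.2)]) (drift step G).
have : \sum_(p <- survivors K | p \in survivors K) X p == 0.
  by rewrite -big_seq -mean_iter_kill -iterD mean_survivors_drift.
rewrite psumr_eq0 => [/allP /(_ p p_in)|p' p'_in]; last first.
  by rewrite mulr_ge0 ?(survivors_ge0 p'_in) //; apply: mean_ge0 => // r /iter_kill1_ge0.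
by rewrite p_in /= /X mulf_eq0 gt_eqF //= => /eqP.
Qed.

Lemma survivor_drift K p : p \in survivors K -> 0 < p.1 -> drift step G p.2 = 0.
Proof. by move=> p_in p_gt0; rewrite -(survivors_future_drift 0 p_in p_gt0) mean1. Qed.

Lemma survivors_future_G K m p : p \in survivors K -> 0 < p.1 ->
  mean (iter m kill_y [:: (1, p.2)]) G = G p.2.
Proof.
move=> p_in p_gt0; elim: m => [|m IH]; first exact: mean1.
by rewrite iterS mean_kill_G IH (survivors_future_drift m p_in p_gt0) addr0.
Qed.

Definition second_moment k := mean (survivors k) (fun x => G x ^+ 2).

Lemma second_momentS k :
  second_moment k.+1 = second_moment k + mean (survivors k) (jump2 step G).
Proof.
rewrite /second_moment /survivors iterS mean_kill_G2.
have -> : mean (survivors k) (fun x => G x * drift step G x) = 0.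
  rewrite /mean big_seq big1 // => p p_in.
  have := survivors_ge0 p_in; rewrite le0r => /orP [/eqP -> | p_gt0]; first by rewrite mul0r.
  by rewrite (survivor_drift p_in p_gt0) !mulr0.
by rewrite mulr0 addr0.
Qed.

Lemma jump2_ge0 x : 0 <= jump2 step G x.
Proof.
rewrite /jump2 /step_mean big_seq; apply: sumr_ge0 => q q_in.
by rewrite mulr_ge0 ?sqr_ge0 ?(step_ge0 q_in).
Qed.


Lemma jump2_le x : jump2 step G x <= B ^+ 2.
Proof.
rewrite /jump2 /step_mean -[leRHS]mulr1 -(step_sum1 x) mulr_sumr big_seq [leRHS]big_seq.
apply: ler_sum => q q_in; rewrite [leRHS]mulrC ler_wpM2l ?(step_ge0 q_in) //.
exact/sqr_le_of_norm/jump_le.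
Qed.

Lemma second_moment_le k : second_moment k <= B ^+ 2 * survival_sum k.
Proof.
elim: k => [|k IH]; first by rewrite /survival_sum big_geq // mulr0 /second_moment mean1 Gy0 expr0n.
rewrite second_momentS /survival_sum big_nat_recr //= mulrDr lerD //.
rewrite /survival /mass -meanZ; apply: ler_mean => p p_in.
by rewrite mulr1 ler_wpM2l ?(survivors_ge0 p_in) ?jump2_le.
Qed.

Lemma second_moment_mono i j : (i <= j)%N -> second_moment i <= second_moment j.
Proof.
move/subnK => <-; elim: (j - i)%N => //= m IH.
rewrite addSn second_momentS (le_trans IH) // lerDl.
by apply: mean_ge0 => [p /survivors_ge0|]; last exact: jump2_ge0.
Qed.

Lemma second_moment1 : second_moment 1 = jump2 step G y.
Proof. by rewrite second_momentS /second_moment !mean1 Gy0 expr0n add0r. Qed.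

(* Started at a survivor [p] at time [K], the martingale [G] ends at
   [G y = 0] unless it survives [m] more steps, so it adds at least about
   [G p.2 ^+ 2] to the second moment. *)
Lemma second_moment_double K m :
  2 * second_moment K - (B * K%:R) ^+ 2 * survival (m + K) <= second_moment (m + K).
Proof.
set C := (B * K%:R) ^+ 2.
pose u (p : R * T) := iter m kill_y [:: (1, p.2)].
have split_mean h : mean (survivors (m + K)) h = \sum_(p <- survivors K) p.1 * mean (u p) h.
  by rewrite /survivors iterD mean_iter_kill.
have -> : 2 * second_moment K - C * survival (m + K) =
    \sum_(p <- survivors K) (2 * (p.1 * G p.2 ^+ 2) - C * (p.1 * mass (u p))).
  by rewrite sumrB -!mulr_sumr /survival /mass split_mean.
rewrite /second_moment split_mean big_seq [leRHS]big_seq; apply: ler_sum => p p_in.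
have := survivors_ge0 p_in; rewrite le0r => /orP [/eqP -> | p_gt0].
  by rewrite !mul0r !mulr0 subrr.
have u_ge0 r : r \in u p -> 0 <= r.1 by move/iter_kill1_ge0.
have mass_ge0 : 0 <= mass (u p) by apply: mean_ge0.
have Gp_le : G p.2 ^+ 2 <= C by apply/sqr_le_of_norm/(survivors_G_le p_in).
have Gu : mean (u p) G = G p.2 := survivors_future_G m p_in p_gt0.
have := mean_sqr_ge G (G p.2) u_ge0; rewrite Gu => le_M.
have pm_ge0 : 0 <= p.1 * mass (u p) by rewrite mulr_ge0 // ltW.
nra.
Qed.

(* The second moment of [G] on survivors is bounded by [B ^+ 2 * E], yet by
   [second_moment_double] it keeps increasing by half its initial value. *)
Lemma jump2_return_le0 : jump2 step G y <= 0.
Proof.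
rewrite leNgt; apply/negP => v_gt0.
have v2_gt0 : 0 < jump2 step G y / 2 by rewrite divr_gt0.
apply: (@no_uniform_increase _ second_moment (B ^+ 2 * E) _ 1 v2_gt0) => [K|K K_gt0].
  rewrite (le_trans (second_moment_le K)) // ler_wpM2l ?sqr_ge0 //.
  exact: survival_sum_le.
have vK : jump2 step G y <= second_moment K by rewrite -second_moment1 second_moment_mono.
have [m small] := exists_small_survival K (sqr_ge0 (B * K%:R)) v2_gt0.
exists (m + K); first by rewrite (leq_trans K_gt0) ?leq_addl.
have := second_moment_double K m.
move: small vK; set X := _ * survival _; set v := jump2 _ _ _.
set s := second_moment K; set s' := second_moment _; lra.
Qed.

End Submartingale.
End ReturnTime.

Lemma submartingale_not_positive_recurrent (R : realType) (T : eqType)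
    (step : T -> seq (R * T)) (y : T) (G : T -> R) (B : R) :
  (forall x q, q \in step x -> 0 <= q.1) ->
  (forall x, \sum_(q <- step x) q.1 = 1) ->
  G y = 0 -> 0 < B ->
  (forall x q, q \in step x -> `|G q.2 - G x| <= B) ->
  (forall x, 0 <= drift step G x) ->
  0 < jump2 step G y ->
  ~ positive_recurrent step y.
Proof.
move=> step_ge0 step_sum1 Gy0 B_gt0 jump_le drift_ge0 v_gt0 [ret_cvg [E mean_ret_cvg]].
move: v_gt0; rewrite ltNge.
by rewrite (jump2_return_le0 step_ge0 step_sum1 ret_cvg mean_ret_cvg Gy0 B_gt0 jump_le drift_ge0).
Qed.


Lemma sumr_seq_gt0 (V : numDomainType) (I : eqType) (s : seq I) (F : I -> V) :
  s != [::] -> (forall i, i \in s -> 0 < F i) -> 0 < \sum_(i <- s) F i.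
Proof.
case: s => [//|i s] _ F_gt0; rewrite big_cons ltr_pwDl ?F_gt0 ?mem_head //.
by rewrite big_seq sumr_ge0 // => j j_s; rewrite ltW ?F_gt0 // inE j_s orbT.
Qed.

Lemma ord2_neq0 (a : 'I_2) : (a != 0) = (a == 1).
Proof. by case: a => [[|[|]]]. Qed.

Lemma ord2_neq1 (a : 'I_2) : (a != 1) = (a == 0).
Proof. by case: a => [[|[|]]]. Qed.

Section Network.
Variables (R : realType) (S : nat) (n : 'I_S -> nat).
Variables (sigma : Op n -> 'I_2) (mu : Op n -> R) (l0 : 'I_2).
Hypothesis mu_gt0 : forall o, 0 < mu o.
Hypothesis mu_critical : critical sigma mu.

Definition sign (o : Op n) : R := if sigma o == l0 then 1 else -1.

(* The expected work that a job of stream [i] about to undergo operation [j]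
   still brings to the other server, minus the work it brings to [l0]. *)
Definition residual_work (i : 'I_S) (j : nat) : R :=
  \sum_(k < (n i).+1 | (j <= k)%N) - (sign (op_of k) / mu (op_of k)).

Definition imbalance (x : State n) : R :=
  \sum_(q : Queue n) (x q)%:R * residual_work (tag q) (val (tagged q)).+1.

Lemma residual_work_top i : residual_work i (n i).+1 = 0.
Proof. by rewrite /residual_work big_pred0 // => k; rewrite leqNgt ltn_ord. Qed.

Lemma critical_other (i : 'I_S) (l : 'I_2) :
  \sum_(k < (n i).+1 | sigma (op_of k) != l) (mu (op_of k))^-1 =
  \sum_(k < (n i).+1 | sigma (op_of k) == l) (mu (op_of k))^-1.
Proof.
have [->|->] : l = 0 \/ l = 1 by case: l => [[|[|//]]] ? ; [left|right]; apply: val_inj.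
  by rewrite (eq_bigl _ _ (fun k => ord2_neq0 _)) mu_critical.
by rewrite (eq_bigl _ _ (fun k => ord2_neq1 _)) mu_critical.
Qed.

(* This is where criticality enters: a fresh job brings the same expected
   work to both servers. *)
Lemma residual_work0 i : residual_work i 0 = 0.
Proof.
rewrite /residual_work sumrN (bigID (fun k => sigma (op_of k) == l0)) /=.
have l0_part : \sum_(k < (n i).+1 | (0 <= k)%N && (sigma (op_of k) == l0))
    sign (op_of k) / mu (op_of k) =
    \sum_(k < (n i).+1 | sigma (op_of k) == l0) (mu (op_of k))^-1.
  by apply: eq_big => [k | k /andP [_ /eqP sk]]; rewrite ?leq0n // /sign sk eqxx mul1r.
have other_part : \sum_(k < (n i).+1 | (0 <= k)%N && ~~ (sigma (op_of k) == l0))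
    sign (op_of k) / mu (op_of k) =
    - \sum_(k < (n i).+1 | sigma (op_of k) != l0) (mu (op_of k))^-1.
  rewrite -sumrN; apply: eq_big => [k | k /andP [_ sk]]; rewrite ?leq0n //.
  by rewrite /sign (negbTE sk) mulN1r.
by rewrite l0_part other_part critical_other subrr oppr0.
Qed.

Lemma residual_workS (o : Op n) :
  residual_work (tag o) (val (tagged o)) =
  - (sign o / mu o) + residual_work (tag o) (val (tagged o)).+1.
Proof.
case: o => i j /=; rewrite /residual_work (bigD1 j) //=; congr (_ + _).
by apply: eq_bigl => k; rewrite ltn_neqAle andbC eq_sym.
Qed.

Lemma queue_eq (q1 q2 : Queue n) :
  tag q1 = tag q2 -> val (tagged q1) = val (tagged q2) -> q1 = q2.
Proof. by case: q1 q2 => i1 j1 [i2 j2] /= Ei; subst i2 => /val_inj ->. Qed.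

Lemma sum_queue_at (i : 'I_S) (m : nat) (F : 'I_S -> nat -> R) :
  \sum_(q : Queue n)
     (if (tag q == i) && (val (tagged q) == m) then F (tag q) (val (tagged q)) else 0)
  = if (m < n i)%N then F i m else 0.
Proof.
case: ltnP => [m_lt|m_ge].
  rewrite (bigD1 (Tagged (fun i => 'I_(n i)) (Ordinal m_lt))) //= !eqxx /=.
  rewrite big1 ?addr0 // => q q_neq; case: ifP => // /andP [/eqP qi /eqP qm].
  by move: q_neq; rewrite (@queue_eq q (Tagged _ (Ordinal m_lt))) ?eqxx.
apply: big1 => q _; case: ifP => // /andP [/eqP qi /eqP qm].
have m_lt : (m < n (tag q))%N by rewrite -qm ltn_ord.
by move: m_ge; rewrite -qi leqNgt m_lt.
Qed.

Lemma sum_queue_residual i m : (m <= n i)%N ->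
  \sum_(q : Queue n) (if (tag q == i) && (val (tagged q) == m)
                      then residual_work (tag q) (val (tagged q)).+1 else 0)
  = residual_work i m.+1.
Proof.
move=> m_le; rewrite (sum_queue_at i m (fun a b => residual_work a b.+1)).
case: ltnP => // m_ge; have -> : m = n i by apply/eqP; rewrite eqn_leq m_le.
by rewrite residual_work_top.
Qed.

Lemma next_queue_sub (x : State n) (o : Op n) (q : Queue n) : avail x o ->
  ((Defs.next x o q)%:R - (x q)%:R : R) =
  if tag q == tag o then
    (val (tagged q) == val (tagged o))%:R - ((val (tagged q)).+1 == val (tagged o))%:R
  else 0.
Proof.
move=> o_avail; rewrite /Defs.next ffunE; case: ifP => qo; last by rewrite subrr.
case q_prev: ((val (tagged q)).+1 == val (tagged o)); last first.
  by rewrite subn0 natrD subr0 addrAC subrr add0r.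
have q_ne : (val (tagged q) == val (tagged o)) = false by rewrite -(eqP q_prev) ltn_eqF.
have xq_gt0 : (0 < x q)%N.
  move: o_avail; rewrite /avail -(eqP q_prev) /= => /existsP [q' /and3P [q'o q'q xq']].
  by rewrite (@queue_eq q q') // ?(eqP qo) ?(eqP q'o) //; apply/eqP; rewrite -eqSS (eqP q'q).
by rewrite q_ne /= addn0 natrB //; ring.
Qed.

Lemma sum_queue_prev i m : (m <= n i)%N ->
  \sum_(q : Queue n) (if (tag q == i) && ((val (tagged q)).+1 == m)
                      then residual_work (tag q) (val (tagged q)).+1 else 0)
  = residual_work i m.
Proof.
case: m => [|m] m_le; first by rewrite residual_work0 big1 // => q _; rewrite andbF.
by rewrite -(sum_queue_residual (ltnW m_le)); apply: eq_bigr => q _; rewrite eqSS.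
Qed.

Lemma imbalance_next x o : avail x o -> imbalance (Defs.next x o) - imbalance x = sign o / mu o.
Proof.
move=> o_avail; pose W (q : Queue n) := residual_work (tag q) (val (tagged q)).+1.
have -> : imbalance (Defs.next x o) - imbalance x =
    \sum_(q : Queue n)
      (if (tag q == tag o) && (val (tagged q) == val (tagged o)) then W q else 0) -
    \sum_(q : Queue n)
      (if (tag q == tag o) && ((val (tagged q)).+1 == val (tagged o)) then W q else 0).
  rewrite /imbalance -!sumrB; apply: eq_bigr => q _; rewrite -mulrBl next_queue_sub //.
  case: (tag q == tag o); last by rewrite mul0r subrr.
  by case: (_ == _); case: (_ == _); rewrite /= ?(subrr, subr0, sub0r, mul0r, mul1r, mulN1r).
have o_le : (val (tagged o) <= n (tag o))%N by rewrite -ltnS ltn_ord.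
rewrite /W sum_queue_residual // sum_queue_prev // residual_workS.
by rewrite opprD opprK addrC subrK.
Qed.

Variables (pol : policy n) (o0 : Op n).
Hypothesis pol_nonidling : nonidling sigma pol.
Hypothesis o0_l0 : sigma o0 = l0.
Hypothesis o0_avail : forall x, avail x o0.

Lemma policy_some x l o : pol x l = Some o -> sigma o = l /\ avail x o.
Proof. by move=> pol_xl; have := pol_nonidling x l; rewrite pol_xl. Qed.

Lemma policy_busy_l0 x : exists o, pol x l0 = Some o.
Proof.
case pol_x: (pol x l0) => [a | ]; first by exists a.
by have := pol_nonidling x l0; rewrite pol_x => /(_ o0 o0_l0); rewrite o0_avail.
Qed.

Lemma active_avail x o : o \in active pol x -> avail x o.
Proof. by rewrite mem_pmap => /mapP [l _ /esym /policy_some []]. Qed.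

Lemma active_neq0 x : active pol x != [::].
Proof.
have [a pol_x] := policy_busy_l0 x.
have : a \in active pol x by rewrite mem_pmap; apply/mapP; exists l0; rewrite ?mem_enum.
by case: (active pol x).
Qed.

Lemma total_rate_gt0 x : 0 < total_rate mu pol x.
Proof. by apply: sumr_seq_gt0 => [|o _]; [exact: active_neq0 | exact: mu_gt0]. Qed.

Lemma jump_stepE x : jump_step mu pol x =
  [seq (mu o / total_rate mu pol x, Defs.next x o) | o <- active pol x].
Proof. by rewrite /jump_step; case: (active pol x) (active_neq0 x). Qed.

(* Server [l0] always contributes [+1], the other server at worst [-1]. *)
Lemma sum_active_sign_ge0 x : 0 <= \sum_(o <- active pol x) sign o.
Proof.
rewrite /active big_pmap.
have -> : enum 'I_2 = [:: ord0; ord_max] by apply: (inj_map val_inj); rewrite val_enum_ord.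
rewrite big_cons big_seq1 /=.
have sign_ge l : -1 <= oapp sign 0 (pol x l).
  case: (pol x l) => [a | ] /=; last by rewrite lerN10.
  by rewrite /sign; case: ifP => _; rewrite ?lexx // (le_trans (lerN10 _)) ?ler01.
have sign_l0 : oapp sign 0 (pol x l0) = 1.
  have [a pol_x] := policy_busy_l0 x; rewrite pol_x /= /sign.
  by have [-> _] := policy_some pol_x; rewrite eqxx.
have [l0E|l0E] : l0 = ord0 \/ l0 = ord_max.
  by case: l0 => [[|[|//]]] ? ; [left|right]; apply: val_inj.
  by rewrite -l0E sign_l0 addrC -lerBlDr sub0r.
by rewrite -l0E sign_l0 -lerBlDr sub0r.
Qed.

Definition inv_rate_sum : R := \sum_(o : Op n) (mu o)^-1.

Lemma inv_rate_le o : (mu o)^-1 <= inv_rate_sum.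
Proof.
rewrite /inv_rate_sum (bigD1 o) //= lerDl sumr_ge0 // => o' _.
by rewrite invr_ge0 ltW.
Qed.

Lemma norm_sign_div o : `|sign o / mu o| = (mu o)^-1.
Proof.
rewrite normrM normfV (gtr0_norm (mu_gt0 o)) /sign.
by case: ifP => _; rewrite ?normrN normr1 mul1r.
Qed.

Lemma sign_neq0 o : sign o != 0.
Proof. by rewrite /sign; case: ifP => _; rewrite ?oppr_eq0 oner_eq0. Qed.

Lemma jump_step_not_positive_recurrent y : ~ positive_recurrent (jump_step mu pol) y.
Proof.
pose G x := imbalance x - imbalance y.
have dG x o : o \in active pol x -> G (Defs.next x o) - G x = sign o / mu o.
  by move=> o_act; rewrite /G opprB addrA subrK imbalance_next ?active_avail.
apply: (@submartingale_not_positive_recurrent _ _ _ y G inv_rate_sum).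
- move=> x q; rewrite jump_stepE => /mapP [a _ ->] /=.
  by rewrite divr_ge0 ?ltW ?total_rate_gt0.
- move=> x; rewrite jump_stepE big_map -mulr_suml divff //.
  by rewrite gt_eqF ?total_rate_gt0.
- by rewrite /G subrr.
- by rewrite (lt_le_trans _ (inv_rate_le o0)) ?invr_gt0.
- move=> x q; rewrite jump_stepE => /mapP [a a_act ->] /=.
  by rewrite dG // norm_sign_div inv_rate_le.
- move=> x; rewrite /drift /step_mean jump_stepE big_map.
  rewrite (eq_big_seq (fun o => sign o / total_rate mu pol x)) => [|o o_act].
    by rewrite -mulr_suml divr_ge0 ?sum_active_sign_ge0 ?ltW ?total_rate_gt0.
  by rewrite /= dG //; field; rewrite !gt_eqF ?mu_gt0 ?total_rate_gt0.
- rewrite /jump2 /step_mean jump_stepE big_map sumr_seq_gt0 ?active_neq0 // => o o_act.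
  rewrite /= dG // mulr_gt0 ?divr_gt0 ?total_rate_gt0 //.
  by rewrite lt0r sqr_ge0 andbT sqrf_eq0 mulf_neq0 ?sign_neq0 ?invr_neq0 ?gt_eqF.
Qed.

End Network.

Theorem theorem4 (R : realType) (S : nat) (n : 'I_S -> nat)
  (sigma : Op n -> 'I_2) (mu : Op n -> R) :
  (0 < S)%N ->
  (forall i : 'I_S, (1 <= n i)%N) ->
  (forall o : Op n, 0 < mu o) ->
  critical sigma mu ->
  forall pol : policy n, nonidling sigma pol ->
  forall x0 : State n,
    ~ exists C : pred (State n),
        pos_rec_class (jump_step mu pol) C /\ reached_as (jump_step mu pol) x0 C.
Proof.
move=> S_gt0 _ mu_gt0 mu_critical pol pol_nonidling x0 [C [[[[y yC] _] C_pos] _]].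
pose o0 := op_of (ord0 : 'I_(n (Ordinal S_gt0)).+1).
have o0_avail x : avail x o0 by [].
exact: (jump_step_not_positive_recurrent mu_gt0 mu_critical pol_nonidling
          (erefl (sigma o0)) o0_avail (C_pos y yC)).
Qed.
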